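(* Let $0\le p\le q$ be integers and $\ell\ge0$ an integer. Then $$\nu(\ell,[p]\times[q])=\begin{cases}0,&\ell\le p,\\ \ell-p,&p<\ell\le q,\\ 2\ell-p-q,& q<\ell\le p+q,\\ \ell,&\ell>p+q.\end{cases}$$
   Context: Let $c_1,c_2,\dots$ and $s_1,s_2,\dots$ be distinct vertices. $[i]\times[j]$ denotes the set of pairs $\{c_as_b:1\le a\le i,1\le b\le j\}$. For a set $Q$ of pairs $c_as_b$, $\nu(\ell,Q)$ is the matching number of the bipartite graph with sides $\{c_1,\dots,c_\ell\}$, $\{s_1,\dots,s_\ell\}$ and edge set $([\ell]\times[\ell])\setminus Q$. *)

From mathcomp Require Import all_boot.
Set Implicit Arguments. Unset Strict Implicit. Unset Printing Implicit Defensive.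

(* A set Q of pairs c_a s_b (a, b >= 1) is encoded as a relation on nat:
   Q a b  <->  c_a s_b \in Q  (1-based indices, as in the paper). *)

Definition rect (i j : nat) : rel nat :=
  fun a b => (1 <= a <= i) && (1 <= b <= j).

(* Bipartite graph with sides {c_1..c_l}, {s_1..s_l}; the vertex c_(a+1)
   (resp. s_(b+1)) is represented by a : 'I_l (resp. b : 'I_l).
   Edge set ([l] x [l]) \ Q. *)
Definition edgeQ (l : nat) (Q : rel nat) (e : 'I_l * 'I_l) : bool :=
  ~~ Q e.1.+1 e.2.+1.

Definition is_matching (l : nat) (Q : rel nat) (M : {set 'I_l * 'I_l}) : bool :=
  [forall e in M, edgeQ Q e] &&
  [forall e in M, forall f in M,
     ((e.1 == f.1) || (e.2 == f.2)) ==> (e == f)].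

Definition nu (l : nat) (Q : rel nat) : nat :=
  \max_(M : {set 'I_l * 'I_l} | is_matching Q M) #|M|.

From mathcomp Require Import all_boot zify.

(* With 0-based indices, a pair (a, b) is an edge of the graph of [rect p q]
   iff p <= a or q <= b. A matching is injective in both coordinates, so it
   has at most l edges, at most l - p of them with p <= a and at most l - q
   with q <= b: hence nu <= min(l, (l - p) + (l - q)). Conversely, the cyclic
   shift a |-> (a + q) mod l is a perfect matching of K_{l,l}; keeping its
   edges that avoid the rectangle (all a >= p and all a < l - q) gives the
   matching that attains this bound. The four cases of the theorem are this
   minimum written out for p <= q. *)

Lemma card_ord_pred l (P : pred nat) :
  #|[set a : 'I_l | P a]| = count P (iota 0 l).
Proof.
rewrite cardsE cardE /enum_mem -enumT /= size_filter -val_enum_ord count_map.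
exact: eq_count.
Qed.

Lemma card_ord_geq_or_lt l p k :
  #|[set a : 'I_l | (p <= a) || (a < k)]| = minn l k + (l - maxn p k).
Proof.
rewrite (card_ord_pred _ (fun i => (p <= i) || (i < k))).
elim: l => [|l IHl]; first by rewrite min0n.
rewrite -addn1 iotaD count_cat IHl /= addn0.
by case: (leqP p l) => ?; case: (ltnP l k) => ? /=; lia.
Qed.

Lemma card_ord_geq l k : #|[set a : 'I_l | k <= a]| = l - k.
Proof.
have -> : [set a : 'I_l | k <= a] = [set a : 'I_l | (k <= a) || (a < 0)].
  by apply/setP => a; rewrite !inE ltn0 orbF.
by rewrite card_ord_geq_or_lt; lia.
Qed.

Lemma leq_card_in_maps (aT rT : finType) (f : aT -> rT)
    (A : {pred aT}) (B : {pred rT}) :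
  {in A &, injective f} -> {in A, forall x, f x \in B} -> #|A| <= #|B|.
Proof.
move=> injf fAB; rewrite -(card_in_imset injf).
by apply/subset_leq_card/subsetP => _ /imsetP[x /fAB fxB ->].
Qed.

Section Matchings.

Context {l : nat} {Q : rel nat}.
Implicit Type M : {set 'I_l * 'I_l}.

Lemma matching_edge [M e] : is_matching Q M -> e \in M -> edgeQ Q e.
Proof. by case/andP => /forall_inP edgeM _; apply: edgeM. Qed.

Lemma matching_disjoint [M] [e f : 'I_l * 'I_l] :
  is_matching Q M -> e \in M -> f \in M -> (e.1 == f.1) || (e.2 == f.2) ->
  e = f.
Proof.
case/andP => _ /forall_inP disjM eM fM.
by move/(implyP (forall_inP (disjM e eM) f fM))/eqP.
Qed.

Lemma matching_fst_inj [M] :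
  is_matching Q M -> {in M &, injective (fun e : 'I_l * 'I_l => e.1)}.
Proof.
move=> matchM e f eM fM e1f1.
by apply: (matching_disjoint matchM eM fM); rewrite e1f1 eqxx.
Qed.

Lemma matching_snd_inj [M] :
  is_matching Q M -> {in M &, injective (fun e : 'I_l * 'I_l => e.2)}.
Proof.
move=> matchM e f eM fM e2f2; apply: (matching_disjoint matchM eM fM).
by rewrite e2f2 eqxx orbT.
Qed.

Lemma card_matching_le [M] : is_matching Q M -> #|M| <= l.
Proof. by move/matching_fst_inj/leq_card_in; rewrite card_ord. Qed.

Lemma card_matching_fst_geq [M] k :
  is_matching Q M -> #|[set e in M | k <= e.1]| <= l - k.
Proof.
move=> matchM; rewrite -(card_ord_geq l k).
apply: (@leq_card_in_maps _ _ (fun e : 'I_l * 'I_l => e.1)) => [e f|e].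
  rewrite !inE => /andP[eM _] /andP[fM _].
  exact: (matching_fst_inj matchM _ _ eM fM).
by rewrite !inE => /andP[].
Qed.

Lemma card_matching_snd_geq [M] k :
  is_matching Q M -> #|[set e in M | k <= e.2]| <= l - k.
Proof.
move=> matchM; rewrite -(card_ord_geq l k).
apply: (@leq_card_in_maps _ _ (fun e : 'I_l * 'I_l => e.2)) => [e f|e].
  rewrite !inE => /andP[eM _] /andP[fM _].
  exact: (matching_snd_inj matchM _ _ eM fM).
by rewrite !inE => /andP[].
Qed.

Lemma graph_is_matching (f : 'I_l -> 'I_l) (G : {set 'I_l}) :
  injective f -> {in G, forall a, edgeQ Q (a, f a)} ->
  is_matching Q [set (a, f a) | a in G].
Proof.
move=> injf edgeG; apply/andP; split.
  by apply/forall_inP => _ /imsetP[a /edgeG edge_a ->].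
apply/forall_inP => _ /imsetP[a _ ->]; apply/forall_inP => _ /imsetP[b _ ->].
by apply/implyP => /= /orP[/eqP -> | /eqP/injf ->].
Qed.

Lemma card_matching_leq_nu [M] : is_matching Q M -> #|M| <= nu l Q.
Proof. exact: leq_bigmax_cond. Qed.

Lemma nu_leq n : (forall M, is_matching Q M -> #|M| <= n) -> nu l Q <= n.
Proof. by move=> leM; rewrite /nu; apply/bigmax_leqP. Qed.

End Matchings.

Lemma edge_rect l p q (e : 'I_l * 'I_l) :
  edgeQ (rect p q) e = (p <= e.1) || (q <= e.2).
Proof. by rewrite /edgeQ /rect /= negb_and -!leqNgt. Qed.

Lemma nu_rect_le l p q : nu l (rect p q) <= minn l ((l - p) + (l - q)).
Proof.
apply: nu_leq => M matchM; rewrite leq_min (card_matching_le matchM) /=.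
have coverM : M \subset [set e in M | p <= e.1] :|: [set e in M | q <= e.2].
  apply/subsetP => e eM.
  by rewrite !inE eM /= -edge_rect (matching_edge matchM).
apply: leq_trans (subset_leq_card coverM) _.
apply: leq_trans (leq_card_setU _ _) _.
apply: leq_add; first exact: card_matching_fst_geq p matchM.
exact: card_matching_snd_geq q matchM.
Qed.

Definition rot_ord {l} k (a : 'I_l) : 'I_l :=
  Ordinal (ltn_pmod (a + k) (leq_ltn_trans (leq0n a) (ltn_ord a))).

Lemma rot_ord_inj l k : injective (@rot_ord l k).
Proof.
move=> a b /(congr1 val) /= /eqP; rewrite eqn_modDr !modn_small //.
by move/eqP/val_inj.
Qed.

Lemma nu_rect_ge l p q : minn l ((l - p) + (l - q)) <= nu l (rect p q).
Proof.
pose G := [set a : 'I_l | (p <= a) || (q <= rot_ord q a)].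
have matchG : is_matching (rect p q) [set (a, rot_ord q a) | a in G].
  apply: graph_is_matching => [|a]; first exact: rot_ord_inj.
  by rewrite edge_rect inE.
apply: leq_trans (card_matching_leq_nu matchG).
rewrite card_imset; last by move=> a b [].
have -> : minn l ((l - p) + (l - q)) =
          #|[set a : 'I_l | (p <= a) || (a < l - q)]|.
  by rewrite card_ord_geq_or_lt; lia.
apply/subset_leq_card/subsetP => a; rewrite !inE.
case/orP=> [-> // | a_lt]; apply/orP; right.
by rewrite /= modn_small ?leq_addl // addnC -ltn_subRL.
Qed.

Lemma nu_rect l p q : nu l (rect p q) = minn l ((l - p) + (l - q)).
Proof. by apply/eqP; rewrite eqn_leq nu_rect_le nu_rect_ge. Qed.

Theorem lemma2 (p q l : nat) :
  p <= q ->
  nu l (rect p q) =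
    if l <= p then 0
    else if l <= q then l - p
    else if l <= p + q then 2 * l - p - q
    else l.
Proof.
move=> le_pq; rewrite nu_rect.
by case: (leqP l p) => ?; [|case: (leqP l q) => ?; [|case: leqP => ?]]; lia.
Qed.
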